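(* Let $G$ be a digraph and $n\ge 1$. If $G$ is congruence $n$-permutable then $G^{\bot\top}$ is congruence $(n+2)$-permutable. If $G$ is nondismantlable and $G^{\bot\top}$ is congruence $(n+2)$-permutable, then $G$ is congruence $n$-permutable.
   Context: Digraphs are finite and loopless. For $G=(V,E)$: $G^\bot$ is the digraph on $V\cup\{\bot\}$ with edges $E\cup\{(\bot,v):v\in V\}$; $G^\top$ is the digraph on $V\cup\{\top\}$ with edges $E\cup\{(v,\top):v\in V\}$; $G^{\bot\top}=(G^\bot)^\top$. For a vertex $x$, $x^+=\{v:(x,v)\in E\}$ and $x^-=\{v:(v,x)\in E\}$. $G$ is nondismantlable if for all $v,w\in V$, $v^+\subseteq w^+$ and $v^-\subseteq w^-$ imply $v=w$. A polymorphism is a map $f:V^k\to V$ with $(f(a_1,\dots,a_k),f(b_1,\dots,b_k))\in E$ whenever all $(a_i,b_i)\in E$. A digraph is congruence $n$-permutable if it has ternary polymorphisms $p_0,\dots,p_n$ with $p_0(x,y,z)=x$, $p_i(x,x,y)=p_{i+1}(x,y,y)$ for $0\le i<n$, and $p_n(x,y,z)=z$, for all vertices $x,y,z$; congruence $1$-permutable means the equation $x=y$ holds, i.e. the digraph has one vertex. *)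

From mathcomp Require Import all_boot.
Set Implicit Arguments. Unset Strict Implicit. Unset Printing Implicit Defensive.

Definition loopless (V : finType) (E : rel V) : Prop := forall v, ~~ E v v.

Definition nondismantlable (V : finType) (E : rel V) : Prop :=
  forall v w : V,
    (forall u, E v u -> E w u) -> (forall u, E u v -> E u w) -> v = w.

Definition polymorphism3 (V : finType) (E : rel V) (f : V -> V -> V -> V) : Prop :=
  forall a1 a2 a3 b1 b2 b3 : V,
    E a1 b1 -> E a2 b2 -> E a3 b3 -> E (f a1 a2 a3) (f b1 b2 b3).

(* Congruence n-permutability: ternary polymorphisms p_0, ..., p_n with the
   Hagemann--Mitschke identities. *)
Definition cong_perm (V : finType) (E : rel V) (n : nat) : Prop :=
  exists p : nat -> V -> V -> V -> V,
    (forall i, i <= n -> polymorphism3 E (p i)) /\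
    (forall x y z, p 0 x y z = x) /\
    (forall i, i < n -> forall x y, p i x x y = p i.+1 x y y) /\
    (forall x y z, p n x y z = z).

(* G^bot : vertices option V, with None = bot. *)
Definition add_bot (V : finType) (E : rel V) : rel (option V) :=
  fun a b => match a, b with
             | Some u, Some v => E u v
             | None, Some _ => true
             | _, _ => false
             end.

(* G^top : vertices option V, with None = top. *)
Definition add_top (V : finType) (E : rel V) : rel (option V) :=
  fun a b => match a, b with
             | Some u, Some v => E u v
             | Some _, None => true
             | _, _ => false
             end.

(* G^{bot top} = (G^bot)^top on option (option V):
   Some (Some v) = v, Some None = bot, None = top. *)
Definition add_bot_top (V : finType) (E : rel V) : rel (option (option V)) :=
  add_top (add_bot E).

(* Forward direction: extend each p_i canonically to G^{bot top}, sending a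
   tuple that contains bot (hence has no in-edges) to bot and one that contains
   top (hence has no out-edges) to top.  These extensions still satisfy the
   Hagemann--Mitschke identities among themselves, but the extensions of the
   projections p_0 and p_n are no longer projections; patching them on the
   diagonals y = z and x = y lets them connect to the genuine projections, which
   become the two extra terms of the chain.

   Backward direction: V^3 lies between bot^3 and top^3, so every polymorphism
   of G^{bot top} preserves V^3 and restricts to a polymorphism of G.  Since
   q_1(x, y, y) = x, comparing q_1(x, y, z) with q_1(u, top, top) = u and
   q_1(u, bot, bot) = u shows that q_1(x, y, z) has at least the neighbours of
   x, so nondismantlability makes the restriction of q_1 the first projection;
   symmetrically for q_{n+1}. *)

From mathcomp Require Import all_boot zify.
Set Implicit Arguments. Unset Strict Implicit.

Section BotTop.
Variables (V : finType) (E : rel V).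
Local Notation H := (option (option V)).
Local Notation bot := (Some None : H).
Local Notation top := (None : H).
Local Notation vtx v := (Some (Some v)).
Local Notation EH := (add_bot_top E).

(* A tuple meeting both bot and top is isolated, so its value is free; z is
   the choice compatible with guard_first and guard_last. *)
Definition ext_bot_top (f : V -> V -> V -> V) (x y z : H) : H :=
  match x, y, z with
  | vtx u, vtx v, vtx w => vtx (f u v w)
  | _, _, _ =>
    if bot \in [:: x; y; z] then (if top \in [:: x; y; z] then z else bot) else top
  end.

Definition guard_first (f : H -> H -> H -> H) (x y z : H) : H :=
  if y == z then x else f x y z.

Definition guard_last (f : H -> H -> H -> H) (x y z : H) : H :=
  if x == y then z else f x y z.

Lemma ext_bot_top_poly f : polymorphism3 E f -> polymorphism3 EH (ext_bot_top f).
Proof.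
by move=> Pf [[a1|]|] [[a2|]|] [[a3|]|] [[b1|]|] [[b2|]|] [[b3|]|] //=; apply: Pf.
Qed.

Lemma guard_first_poly f : (forall u v w, f u v w = u) ->
  polymorphism3 EH (guard_first (ext_bot_top f)).
Proof.
move=> fE [[a1|]|] [[a2|]|] [[a3|]|] [[b1|]|] [[b2|]|] [[b3|]|] //=;
  rewrite /guard_first /= ?fE; do 2?case: eqP => //.
Qed.

Lemma guard_last_poly f : (forall u v w, f u v w = w) ->
  polymorphism3 EH (guard_last (ext_bot_top f)).
Proof.
move=> fE [[a1|]|] [[a2|]|] [[a3|]|] [[b1|]|] [[b2|]|] [[b3|]|] //=;
  rewrite /guard_last /= ?fE; do 2?case: eqP => //.
Qed.

Lemma ext_bot_top_mid f g : (forall u v, f u u v = g u v v) ->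
  forall x y, ext_bot_top f x x y = ext_bot_top g x y y.
Proof. by move=> fgE [[x|]|] [[y|]|] //=; rewrite fgE. Qed.

Lemma guard_first_diag f : (forall u, f u u u = u) ->
  forall x y, guard_first (ext_bot_top f) x x y = ext_bot_top f x x y.
Proof.
move=> fE x y; rewrite /guard_first; case: eqP => // <-.
by case: x => [[x|]|] //=; rewrite fE.
Qed.

Lemma guard_last_diag f : (forall u, f u u u = u) ->
  forall x y, guard_last (ext_bot_top f) x y y = ext_bot_top f x y y.
Proof.
move=> fE x y; rewrite /guard_last; case: eqP => // ->.
by case: y => [[y|]|] //=; rewrite fE.
Qed.

(* The fallback u is never taken when f is a polymorphism (restrictK). *)
Definition restrict (f : H -> H -> H -> H) (u v w : V) : V :=
  if f (vtx u) (vtx v) (vtx w) is vtx t then t else u.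

Section Restriction.
Variable f : H -> H -> H -> H.
Hypothesis Pf : polymorphism3 EH f.

Lemma restrictK u v w : vtx (restrict f u v w) = f (vtx u) (vtx v) (vtx w).
Proof.
have from_bot := Pf (a1 := bot) (a2 := bot) (a3 := bot)
  (b1 := vtx u) (b2 := vtx v) (b3 := vtx w) isT isT isT.
have to_top := Pf (a1 := vtx u) (a2 := vtx v) (a3 := vtx w)
  (b1 := top) (b2 := top) (b3 := top) isT isT isT.
move: from_bot to_top; rewrite /restrict.
by case: (f (vtx u) _ _) => [[t|]|] //; case: (f bot bot bot) => [[?|]|].
Qed.

Lemma restrict_poly : polymorphism3 E (restrict f).
Proof.
move=> a1 a2 a3 b1 b2 b3 e1 e2 e3.
have := Pf (a1 := vtx a1) (a2 := vtx a2) (a3 := vtx a3)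
  (b1 := vtx b1) (b2 := vtx b2) (b3 := vtx b3).
by rewrite -!restrictK; apply.
Qed.

Hypothesis ND : nondismantlable E.

Lemma restrict_first : (forall x y, f x y y = x) -> forall u v w, restrict f u v w = u.
Proof.
move=> fE u v w; symmetry; apply: ND => t e.
- have := Pf (a1 := vtx u) (a2 := vtx v) (a3 := vtx w) (b1 := vtx t) (b2 := top) (b3 := top).
  by rewrite -restrictK fE; apply.
- have := Pf (a1 := vtx t) (a2 := bot) (a3 := bot) (b1 := vtx u) (b2 := vtx v) (b3 := vtx w).
  by rewrite -restrictK fE; apply.
Qed.

Lemma restrict_last : (forall x y, f x x y = y) -> forall u v w, restrict f u v w = w.
Proof.
move=> fE u v w; symmetry; apply: ND => t e.
- have := Pf (a1 := vtx u) (a2 := vtx v) (a3 := vtx w) (b1 := top) (b2 := top) (b3 := vtx t).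
  by rewrite -restrictK fE; apply.
- have := Pf (a1 := bot) (a2 := bot) (a3 := vtx t) (b1 := vtx u) (b2 := vtx v) (b3 := vtx w).
  by rewrite -restrictK fE; apply.
Qed.

End Restriction.

Lemma cong_perm_of_bot_top n :
  nondismantlable E -> cong_perm EH n.+2 -> cong_perm E n.
Proof.
move=> ND [q [Pq [q0 [qS qn]]]].
have Pq_succ i : i <= n -> polymorphism3 EH (q i.+1).
  by move=> le_in; apply: Pq; rewrite ltnS ltnW.
exists (fun i => restrict (q i.+1)); split; [|split; [|split]].
- by move=> i /Pq_succ; apply: restrict_poly.
- by apply: (restrict_first (Pq_succ 0 isT) ND) => x y; rewrite -qS // q0.
- move=> i lt_in u v; apply: Some_inj; apply: Some_inj.
  rewrite (restrictK (Pq_succ _ (ltnW lt_in))) (restrictK (Pq_succ _ lt_in)).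
  by apply: qS; lia.
- move=> u v w; apply: (restrict_last (Pq_succ n (leqnn n)) ND) => x y.
  by rewrite qS // qn.
Qed.

Section LiftChain.
Variables (n : nat) (p : nat -> V -> V -> V -> V).
Hypotheses (n_gt0 : 0 < n) (Pp : forall i, i <= n -> polymorphism3 E (p i)).
Hypotheses (p0 : forall u v w, p 0 u v w = u) (pn : forall u v w, p n u v w = w).
Hypothesis pS : forall i, i < n -> forall u v, p i u u v = p i.+1 u v v.

Definition lift_chain (i : nat) : H -> H -> H -> H :=
  if i == 0 then fun x _ _ => x
  else if i == n.+2 then fun _ _ z => z
  else if i == 1 then guard_first (ext_bot_top (p 0))
  else if i == n.+1 then guard_last (ext_bot_top (p n))
  else ext_bot_top (p i.-1).

Lemma lift_chain_first : lift_chain 1 = guard_first (ext_bot_top (p 0)).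
Proof. by rewrite /lift_chain; do ![case: eqP => ? //; try lia]. Qed.

Lemma lift_chain_mid i : 1 < i <= n -> lift_chain i = ext_bot_top (p i.-1).
Proof. by rewrite /lift_chain => ?; do ![case: eqP => ? //; try lia]. Qed.

Lemma lift_chain_last : lift_chain n.+1 = guard_last (ext_bot_top (p n)).
Proof. by rewrite /lift_chain; do ![case: eqP => ? //; try lia]. Qed.

Lemma lift_chain_end : lift_chain n.+2 = (fun _ _ z => z).
Proof. by rewrite /lift_chain; do ![case: eqP => ? //; try lia]. Qed.

Lemma lift_chain_poly i : i <= n.+2 -> polymorphism3 EH (lift_chain i).
Proof.
move=> le_i; rewrite /lift_chain.
case: eqP => [_ | _]; first by move=> ? ? ? ? ? ? ? _ _.
case: eqP => [_ | ne_end]; first by move=> ? ? ? ? ? ? _ _ ?.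
case: eqP => [_ | _]; first exact: guard_first_poly p0.
case: eqP => [_ | _]; first exact: guard_last_poly pn.
by apply/ext_bot_top_poly/Pp; lia.
Qed.

Lemma lift_chain_xxy i x y :
  0 < i <= n -> lift_chain i x x y = ext_bot_top (p i.-1) x x y.
Proof.
have [-> _ | ne1 i_range] := eqVneq i 1.
  by rewrite lift_chain_first guard_first_diag // => u; rewrite p0.
by rewrite lift_chain_mid //; lia.
Qed.

Lemma lift_chain_xyy i x y :
  1 < i <= n.+1 -> lift_chain i x y y = ext_bot_top (p i.-1) x y y.
Proof.
have [-> _ | ne_last i_range] := eqVneq i n.+1.
  by rewrite lift_chain_last guard_last_diag // => u; rewrite pn.
by rewrite lift_chain_mid //; lia.
Qed.

Lemma lift_chain_step i x y :
  i < n.+2 -> lift_chain i x x y = lift_chain i.+1 x y y.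
Proof.
move=> lt_i; have [-> | i_gt0] := posnP i.
  by rewrite lift_chain_first /guard_first eqxx.
have [-> | ne_last] := eqVneq i n.+1.
  by rewrite lift_chain_last lift_chain_end /guard_last eqxx.
rewrite lift_chain_xxy ?lift_chain_xyy; try lia.
by apply: ext_bot_top_mid => u v; rewrite pS ?prednK //; lia.
Qed.

End LiftChain.

Lemma cong_perm_bot_top n : 0 < n -> cong_perm E n -> cong_perm EH n.+2.
Proof.
move=> n_gt0 [p [Pp [p0 [pS pn]]]].
exists (lift_chain n p); split; [|split; [by []|split]].
- exact: lift_chain_poly.
- by move=> i lt_i x y; apply: lift_chain_step.
- by rewrite lift_chain_end.
Qed.

End BotTop.

Theorem theorem5p3 (V : finType) (E : rel V) (n : nat) :
  loopless E -> 1 <= n ->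
  (cong_perm E n -> cong_perm (add_bot_top E) n.+2) /\
  (nondismantlable E -> cong_perm (add_bot_top E) n.+2 -> cong_perm E n).
Proof.
move=> _ n_gt0; split; first exact: cong_perm_bot_top.
exact: cong_perm_of_bot_top.
Qed.
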